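(* Let $L\subseteq Q$ be an extension of Lie algebras, $I$ an ideal of $L$, and $q_1,\dots,q_n\in Q$ with $[q_i,I]\subseteq L$ for all $i=1,\dots,n$. Let $\mu=\mathrm{ad}_{q_1}\cdots\mathrm{ad}_{q_n}\in A(Q)$. Then $\mu\,(\widetilde I)^n\subseteq A_0$ and $(\widetilde I)^n\mu\subseteq A_0$, where $(\widetilde I)^n$ is the $n$-th power of $\widetilde I$ in the associative algebra $A_Q(L)$.
   Context: Lie algebras over a commutative unital ring $\Phi$. For a Lie algebra $Q$, $\mathrm{ad}_x(y)=[x,y]$, and $A(Q)$ is the associative subalgebra of $\mathrm{End}_\Phi(Q)$ generated by $\{\mathrm{ad}_x:x\in Q\}$. For a Lie subalgebra $L\subseteq Q$: $A_Q(L)$ is the subalgebra of $A(Q)$ generated by $\{\mathrm{ad}_x:x\in L\}$, $A_0=\{\mu\in A(Q):\mu(L)\subseteq L\}$, and for an ideal $I$ of $L$, $\widetilde I$ is the two-sided ideal of $A_Q(L)$ generated by $\{\mathrm{ad}_x:x\in I\}$. *)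

From HB Require Import structures.
From mathcomp Require Import all_boot all_order all_algebra.
Set Implicit Arguments. Unset Strict Implicit. Unset Printing Implicit Defensive.
Import GRing.Theory.
Local Open Scope ring_scope.

Section Lie.
Variables (Phi : comPzRingType) (Q : lmodType Phi).

Definition is_lie_bracket (br : Q -> Q -> Q) : Prop :=
  [/\ (forall a x y z, br (a *: x + y) z = a *: br x z + br y z),
      (forall a x y z, br x (a *: y + z) = a *: br x y + br x z),
      (forall x, br x x = 0)
    & (forall x y z, br x (br y z) + br y (br z x) + br z (br x y) = 0)].

Definition is_submod (S : Q -> Prop) : Prop :=
  [/\ S 0, (forall x y, S x -> S y -> S (x + y)) & (forall a x, S x -> S (a *: x))].

Definition lie_subalg (br : Q -> Q -> Q) (L : Q -> Prop) : Prop :=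
  is_submod L /\ (forall x y, L x -> L y -> L (br x y)).

Definition lie_ideal (br : Q -> Q -> Q) (L I : Q -> Prop) : Prop :=
  [/\ (forall x, I x -> L x), is_submod I & (forall x y, L x -> I y -> I (br x y))].

Definition ad (br : Q -> Q -> Q) (x : Q) : Q -> Q := br x.

Definition fzero : Q -> Q := fun _ => 0.
Definition fadd (f g : Q -> Q) : Q -> Q := fun v => f v + g v.
Definition fscale (a : Phi) (f : Q -> Q) : Q -> Q := fun v => a *: f v.

(* The (non-unital) associative subalgebra of End(Q) generated by S. *)
Inductive alg_gen (S : (Q -> Q) -> Prop) : (Q -> Q) -> Prop :=
  | ag_gen f : S f -> alg_gen S f
  | ag_zero : alg_gen S fzero
  | ag_add f g : alg_gen S f -> alg_gen S g -> alg_gen S (fadd f g)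
  | ag_scale a f : alg_gen S f -> alg_gen S (fscale a f)
  | ag_mul f g : alg_gen S f -> alg_gen S g -> alg_gen S (f \o g).

Definition A_alg (br : Q -> Q -> Q) : (Q -> Q) -> Prop :=
  alg_gen (fun f => exists x, f = ad br x).

Definition A_Q (br : Q -> Q -> Q) (L : Q -> Prop) : (Q -> Q) -> Prop :=
  alg_gen (fun f => exists2 x, L x & f = ad br x).

Definition A_0 (br : Q -> Q -> Q) (L : Q -> Prop) (mu : Q -> Q) : Prop :=
  A_alg br mu /\ (forall x, L x -> L (mu x)).

Inductive ideal_gen (R S : (Q -> Q) -> Prop) : (Q -> Q) -> Prop :=
  | ig_gen f : S f -> ideal_gen R S f
  | ig_zero : ideal_gen R S fzero
  | ig_add f g : ideal_gen R S f -> ideal_gen R S g -> ideal_gen R S (fadd f g)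
  | ig_scale a f : ideal_gen R S f -> ideal_gen R S (fscale a f)
  | ig_mull r f : R r -> ideal_gen R S f -> ideal_gen R S (r \o f)
  | ig_mulr f r : R r -> ideal_gen R S f -> ideal_gen R S (f \o r).

Definition I_tilde (br : Q -> Q -> Q) (L I : Q -> Prop) : (Q -> Q) -> Prop :=
  ideal_gen (A_Q br L) (fun f => exists2 x, I x & f = ad br x).

Inductive fspan (S : (Q -> Q) -> Prop) : (Q -> Q) -> Prop :=
  | fs_gen f : S f -> fspan S f
  | fs_zero : fspan S fzero
  | fs_add f g : fspan S f -> fspan S g -> fspan S (fadd f g)
  | fs_scale a f : fspan S f -> fspan S (fscale a f).

Fixpoint ideal_pow (J : (Q -> Q) -> Prop) (n : nat) : (Q -> Q) -> Prop :=
  match n with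
  | 0%N => J (* unused: the statement assumes n >= 1 *)
  | 1%N => J
  | m.+1 => fspan (fun h => exists f g, [/\ J f, ideal_pow J m g & h = f \o g])
  end.

Definition ad_prod (br : Q -> Q -> Q) (qs : seq Q) : Q -> Q :=
  foldr (fun q f => ad br q \o f) id qs.

End Lie.

From HB Require Import structures.
From mathcomp Require Import all_boot all_order all_algebra.
From Stdlib Require Import FunctionalExtensionality.
Set Implicit Arguments. Unset Strict Implicit. Unset Printing Implicit Defensive.
Import GRing.Theory.
Local Open Scope ring_scope.

(** For [mu nu]: each element of [Ĩ] shifts the series [L, I, [I,I], [I,[I,I]], ...]
    up by one step and each [ad_q] with [[q,I] ⊆ L] shifts it down by one, so
    [mu nu] maps [L] into [L].  For [nu mu] argue dually with [T_0 = L],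
    [T_(j+1) = {v | Ĩ v ⊆ T_j}]: [nu] maps [T_(j+n)] into [T_j] and each [ad_q]
    maps [T_j] into [T_(j+1)].  The latter holds because [Ĩ] is spanned by the
    [r ad_x] with [r ∈ A_Q(L) ∪ {1}] and [x ∈ I], and
    [ad_x ad_q = ad_[x,q] + ad_q ad_x] with [[x,q] ∈ L]. *)

Section EndomorphismSpans.
Variables (Phi : comPzRingType) (Q : lmodType Phi).
Implicit Types (f g h : Q -> Q) (S P : (Q -> Q) -> Prop).
Local Notation fzero := (@fzero Phi Q).

Lemma linD f : linear f -> {morph f : x y / x + y}.
Proof. by move=> hf x y; have := hf 1 x y; rewrite !scale1r. Qed.

Lemma linZ f : linear f -> forall a x, f (a *: x) = a *: f x.
Proof. exact: scalable_linear. Qed.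

Lemma lin0 f : linear f -> f 0 = 0.
Proof. by move=> /linD fD; apply: (@addIr _ (f 0)); rewrite -fD !add0r. Qed.

Lemma lin_fzero : linear fzero.
Proof. by move=> a u v; rewrite /fzero scaler0 addr0. Qed.

Lemma lin_fadd f g : linear f -> linear g -> linear (fadd f g).
Proof. by move=> hf hg a u v; rewrite /fadd hf hg scalerDr addrACA. Qed.

Lemma lin_fscale a f : linear f -> linear (fscale a f).
Proof. by move=> hf b u v; rewrite /fscale hf scalerDr !scalerA mulrC. Qed.

Lemma lin_comp f g : linear f -> linear g -> linear (f \o g).
Proof. by move=> hf hg a u v /=; rewrite hg hf. Qed.

Lemma alg_gen_sub S P : (forall f, S f -> alg_gen P f) ->
  forall f, alg_gen S f -> alg_gen P f.
Proof.
move=> hS f; elim=> {f} [f /hS //| | f g _ hf _ hg | a f _ hf | f g _ hf _ hg].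
- exact: ag_zero.
- exact: ag_add.
- exact: ag_scale.
- exact: ag_mul.
Qed.

Lemma ideal_gen_sub_alg_gen R S P : (forall r, R r -> alg_gen P r) ->
  (forall f, S f -> alg_gen P f) -> forall f, ideal_gen R S f -> alg_gen P f.
Proof.
move=> hR hS f; elim=> {f} [f /hS //| | f g _ hf _ hg | a f _ hf
                        | r f /hR hr _ hf | f r /hR hr _ hf].
- exact: ag_zero.
- exact: ag_add.
- exact: ag_scale.
- exact: ag_mul.
- exact: ag_mul.
Qed.

Lemma alg_gen_linear S f : (forall g, S g -> linear g) -> alg_gen S f -> linear f.
Proof.
move=> hS; elim=> {f} [f /hS //| | f g _ hf _ hg | a f _ hf | f g _ hf _ hg].
- exact: lin_fzero.
- exact: lin_fadd.
- exact: lin_fscale.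
- exact: lin_comp.
Qed.

Lemma comp_fzero f : linear f -> f \o fzero = fzero.
Proof. by move=> hf; apply: functional_extensionality => v; apply: lin0. Qed.

Lemma comp_fadd f g h : linear f -> f \o fadd g h = fadd (f \o g) (f \o h).
Proof. by move=> hf; apply: functional_extensionality => v; apply: linD. Qed.

Lemma comp_fscale a f g : linear f -> f \o fscale a g = fscale a (f \o g).
Proof. by move=> hf; apply: functional_extensionality => v; apply: linZ. Qed.

Lemma submod0 (B : Q -> Prop) : is_submod B -> B 0.
Proof. by case. Qed.

Lemma submodD (B : Q -> Prop) x y : is_submod B -> B x -> B y -> B (x + y).
Proof. by case=> _ hD _; apply: hD. Qed.

Lemma submodZ (B : Q -> Prop) a x : is_submod B -> B x -> B (a *: x).
Proof. by case=> _ _ hZ; apply: hZ. Qed.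

Lemma submodN (B : Q -> Prop) x : is_submod B -> B x -> B (- x).
Proof. by move=> hB Bx; rewrite -scaleN1r; apply: submodZ. Qed.

Inductive vspan (S : Q -> Prop) : Q -> Prop :=
  | vs_gen v : S v -> vspan S v
  | vs_zero : vspan S 0
  | vs_add v w : vspan S v -> vspan S w -> vspan S (v + w)
  | vs_scale a v : vspan S v -> vspan S (a *: v).

Lemma vspan_submod (S : Q -> Prop) : is_submod (vspan S).
Proof. by split=> *; [apply: vs_zero | apply: vs_add | apply: vs_scale]. Qed.

Lemma vspan_sub (S B : Q -> Prop) :
  is_submod B -> (forall v, S v -> B v) -> forall v, vspan S v -> B v.
Proof.
move=> hB hS v; elim=> {v} [v /hS //| | v w _ hv _ hw | a v _ hv].
- exact: submod0.
- exact: submodD.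
- exact: submodZ.
Qed.

Lemma submod_preim f (B : Q -> Prop) :
  linear f -> is_submod B -> is_submod (fun v => B (f v)).
Proof.
move=> lf hB; split=> [|x y|a x]; rewrite ?(lin0 lf) ?(linD lf) ?(linZ lf).
- exact: submod0.
- exact: submodD.
- exact: submodZ.
Qed.

Definition fsubmod P :=
  [/\ P fzero, forall f g, P f -> P g -> P (fadd f g)
    & forall a f, P f -> P (fscale a f)].

Lemma alg_gen_fsubmod S : fsubmod (alg_gen S).
Proof. by split=> *; [apply: ag_zero | apply: ag_add | apply: ag_scale]. Qed.

Lemma fspan_sub S P : fsubmod P -> (forall f, S f -> P f) -> forall f, fspan S f -> P f.
Proof.
case=> h0 hD hZ hS f; elim=> {f} [f /hS //| //| f g _ hf _ hg | a f _ hf].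
- exact: hD.
- exact: hZ.
Qed.

Lemma fsubmod_eval (B : Q -> Prop) v : is_submod B -> fsubmod (fun f => B (f v)).
Proof.
move=> hB; split=> [|f g hf hg|a f hf]; rewrite /fzero /fadd /fscale.
- exact: submod0.
- exact: submodD.
- exact: submodZ.
Qed.

Lemma fsubmod_homo (A B : nat -> Q -> Prop) : (forall k, is_submod (B k)) ->
  fsubmod (fun f => forall k, {homo f : v / A k v >-> B k v}).
Proof.
move=> hB; split=> [k v _|f g hf hg k v hv|a f hf k v hv]; rewrite /fzero /fadd /fscale.
- exact: submod0.
- by apply: submodD; [| exact: hf | exact: hg].
- by apply: submodZ; [| exact: hf].
Qed.

Lemma ideal_pow_ind S (P : nat -> (Q -> Q) -> Prop) :
    (forall m, fsubmod (P m.+2)) -> (forall f, S f -> P 1%N f) ->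
    (forall m f g, S f -> P m.+1 g -> P m.+2 (f \o g)) ->
  forall m nu, (0 < m)%N -> ideal_pow S m nu -> P m nu.
Proof.
move=> hP h1 hstep; elim=> [//|[|m] IH] nu _ /=; first exact: h1.
apply: fspan_sub => // _ [f [g [Sf Pg ->]]].
by apply: hstep => //; apply: IH.
Qed.

End EndomorphismSpans.

Section LieBracket.
Variables (Phi : comPzRingType) (Q : lmodType Phi) (br : Q -> Q -> Q).
Hypothesis Hbr : is_lie_bracket br.

Lemma ad_linear x : linear (ad br x).
Proof. by case: Hbr => _ hr _ _ a; apply: hr. Qed.

Lemma brDr x : {morph br x : y z / y + z}.
Proof. exact: linD (ad_linear x). Qed.

Lemma brZr x a y : br x (a *: y) = a *: br x y.
Proof. exact: linZ (ad_linear x) a y. Qed.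

Lemma br0r x : br x 0 = 0.
Proof. exact: lin0 (ad_linear x). Qed.

Lemma brDl z : {morph br^~ z : x y / x + y}.
Proof. by apply: linD; case: Hbr => hl _ _ _ a x y; apply: hl. Qed.

Lemma brC x y : br x y = - br y x.
Proof.
case: Hbr => _ _ hxx _; apply/eqP; rewrite -addr_eq0.
by have := hxx (x + y); rewrite brDl !brDr !hxx add0r addr0 => ->.
Qed.

Lemma ad_derivation x y z : br x (br y z) = br (br x y) z + br y (br x z).
Proof.
case: Hbr => _ _ _ hjac; have := hjac x y z.
rewrite (brC z (br x y)) (brC z x) -scaleN1r brZr scaleN1r => /eqP.
by rewrite -addrA -opprD subr_eq0 addrC => /eqP.
Qed.

Lemma ad_comm x y :
  ad br x \o ad br y = fadd (ad br y \o ad br x) (ad br (br x y)).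
Proof.
by apply: functional_extensionality => v; rewrite /fadd /ad /= ad_derivation addrC.
Qed.

Section Extension.
Variables (L I : Q -> Prop).
Hypotheses (HL : lie_subalg br L) (HI : lie_ideal br L I).

Notation A_QL := (A_Q br L).
Notation Itil := (I_tilde br L I).

Lemma L_submod : is_submod L. Proof. by case: HL. Qed.
Lemma I_submod : is_submod I. Proof. by case: HI. Qed.

Lemma subalg_br x y : L x -> L y -> L (br x y).
Proof. by case: HL => _; apply. Qed.

Lemma ideal_brl l x : L l -> I x -> I (br l x).
Proof. by case: HI => _ _; apply. Qed.

Lemma ideal_brr x l : I x -> L l -> I (br x l).
Proof. by move=> Ix Ll; rewrite brC; apply: submodN I_submod _; apply: ideal_brl. Qed.

Lemma A_Q_sub_A r : A_QL r -> A_alg br r.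
Proof. by apply: alg_gen_sub => _ [x _ ->]; apply: ag_gen; exists x. Qed.

Lemma I_tilde_sub_A f : Itil f -> A_alg br f.
Proof.
apply: ideal_gen_sub_alg_gen; first exact: A_Q_sub_A.
by move=> _ [x _ ->]; apply: ag_gen; exists x.
Qed.

Lemma A_alg_linear f : A_alg br f -> linear f.
Proof. by apply: alg_gen_linear => _ [x ->]; apply: ad_linear. Qed.

Lemma ideal_pow_sub_A m nu : (0 < m)%N -> ideal_pow Itil m nu -> A_alg br nu.
Proof.
apply: (ideal_pow_ind (P := fun _ => A_alg br)) => [n||n f g /I_tilde_sub_A].
- exact: alg_gen_fsubmod.
- exact: I_tilde_sub_A.
- exact: ag_mul.
Qed.

Lemma ad_prod_A q qs : A_alg br (ad_prod br (q :: qs)).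
Proof.
elim: qs q => [|q' qs IH] q; first by apply: ag_gen; exists q.
by apply: ag_mul; [apply: ag_gen; exists q | apply: IH].
Qed.

Fixpoint ideal_series (k : nat) : Q -> Prop :=
  match k with
  | 0%N => L
  | 1%N => I
  | k'.+1 => vspan (fun v => exists x z, [/\ I x, ideal_series k' z & v = br x z])
  end.

Lemma ideal_series_submod k : is_submod (ideal_series k).
Proof. by case: k => [|[|k]]; [exact: L_submod | exact: I_submod | exact: vspan_submod]. Qed.

Lemma ideal_series_brI k x z :
  I x -> ideal_series k z -> ideal_series k.+1 (br x z).
Proof.
case: k => [|k] Ix hz; first exact: ideal_brr.
by apply: vs_gen; exists x, z.
Qed.

Lemma ideal_series_brL k l z :
  L l -> ideal_series k z -> ideal_series k (br l z).
Proof.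
elim: k z => [|[|k] IH] z Ll; [exact: subalg_br | exact: ideal_brl |].
move: z; apply: (vspan_sub (B := fun z => ideal_series k.+2 (br l z))).
  exact: submod_preim (ad_linear l) (ideal_series_submod _).
move=> _ [x [w [Ix hw ->]]]; rewrite ad_derivation; apply: vs_add; apply: vs_gen.
- by exists (br l x), w; split=> //; apply: ideal_brl.
- by exists x, (br l w); split=> //; apply: IH.
Qed.

Lemma ideal_series_brq k q z : (forall y, I y -> L (br q y)) ->
  ideal_series k.+1 z -> ideal_series k (br q z).
Proof.
move=> hq; elim: k z => [|k IH] z; first exact: hq.
have hS := ideal_series_submod k.+1.
move: z; apply: (vspan_sub (B := fun z => ideal_series k.+1 (br q z))).
  exact: submod_preim (ad_linear q) hS.
move=> _ [x [w [Ix hw ->]]]; rewrite ad_derivation; apply: submodD => //.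
- by apply: ideal_series_brL => //; apply: hq.
- by apply: ideal_series_brI => //; apply: IH.
Qed.

Lemma A_Q_homo_series r k : A_QL r -> {homo r : v / ideal_series k v}.
Proof.
move=> hr; have hS := ideal_series_submod k.
elim: hr => {r} [_ [l Ll ->] | | f g _ hf _ hg | a f _ hf | f g _ hf _ hg] v hv.
- exact: ideal_series_brL.
- exact: submod0.
- by apply: submodD; [| apply: hf | apply: hg].
- by apply: submodZ; [| apply: hf].
- by apply: hf; apply: hg.
Qed.

Lemma I_tilde_homo_series f k :
  Itil f -> {homo f : v / ideal_series k v >-> ideal_series k.+1 v}.
Proof.
move=> hf; have hS := ideal_series_submod k.+1.
elim: hf => {f} [_ [x Ix ->] | | f g _ hf _ hg | a f _ hf | r f hr _ hf
                | f r hr _ hf] v hv.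
- exact: ideal_series_brI.
- exact: submod0.
- by apply: submodD; [| apply: hf | apply: hg].
- by apply: submodZ; [| apply: hf].
- exact: A_Q_homo_series hr _ (hf _ hv).
- exact: hf _ (A_Q_homo_series hr hv).
Qed.

Lemma ideal_pow_homo_series m nu k : (0 < m)%N -> ideal_pow Itil m nu ->
  {homo nu : v / ideal_series k v >-> ideal_series (k + m)%N v}.
Proof.
move=> hm hnu; move: k; apply: (ideal_pow_ind (P := fun m nu =>
  forall k, {homo nu : v / ideal_series k v >-> ideal_series (k + m)%N v})) hm hnu.
- by move=> n; apply: fsubmod_homo => k; apply: ideal_series_submod.
- by move=> f hf k; rewrite addn1; apply: I_tilde_homo_series.
- move=> n f g hf hg k v /hg; rewrite [(k + n.+2)%N]addnS.
  exact: I_tilde_homo_series.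
Qed.

Lemma ad_prod_homo_series qs k :
  (forall q, q \in qs -> forall y, I y -> L (br q y)) ->
  {homo ad_prod br qs : v / ideal_series (size qs + k)%N v >-> ideal_series k v}.
Proof.
elim: qs k => [|q qs IH] k hq v hv //=.
apply: ideal_series_brq; first by apply: hq; rewrite mem_head.
apply: IH; first by move=> q' hq'; apply: hq; rewrite inE hq' orbT.
by rewrite addnS.
Qed.

Fixpoint transporter (j : nat) : Q -> Prop :=
  match j with
  | 0%N => L
  | j'.+1 => fun v => forall f, Itil f -> transporter j' (f v)
  end.

Lemma transporter_submod j : is_submod (transporter j).
Proof.
elim: j => [|j hS]; first exact: L_submod.
split=> [f hf|v w hv hw f hf|a v hv f hf] /=;
  have lf := A_alg_linear (I_tilde_sub_A hf).
- by rewrite (lin0 lf); apply: submod0.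
- by rewrite (linD lf); apply: submodD; [| apply: hv | apply: hw].
- by rewrite (linZ lf); apply: submodZ; [| apply: hv].
Qed.

Lemma transporter_A_Q r j : A_QL r -> {homo r : v / transporter j v}.
Proof.
case: j => [|j] hr v hv; first exact: (A_Q_homo_series (k := 0) hr hv).
by move=> f hf; apply: (hv (f \o r)); apply: ig_mulr.
Qed.

Definition A_Q1 (r : Q -> Q) := r = id \/ A_QL r.

Lemma transporter_A_Q1 r j : A_Q1 r -> {homo r : v / transporter j v}.
Proof. by case=> [-> //| hr]; apply: transporter_A_Q. Qed.

Definition left_ad_span :=
  fspan (fun h => exists r x, [/\ A_Q1 r, I x & h = r \o ad br x]).

Lemma left_ad_span_sub_A f : left_ad_span f -> A_alg br f.
Proof.
apply: fspan_sub; first exact: alg_gen_fsubmod.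
move=> _ [r [x [[->|/A_Q_sub_A hr] _ ->]]]; first by apply: ag_gen; exists x.
by apply: ag_mul => //; apply: ag_gen; exists x.
Qed.

Lemma left_ad_span_mull r f : A_QL r -> left_ad_span f -> left_ad_span (r \o f).
Proof.
move=> hr; have lr := A_alg_linear (A_Q_sub_A hr).
elim=> {f} [_ [r' [x [hr' Ix ->]]] | | f g _ hf _ hg | a f _ hf].
- apply: fs_gen; exists (r \o r'), x; split=> //; right.
  by case: hr' => [-> //| hr']; apply: ag_mul.
- by rewrite comp_fzero //; apply: fs_zero.
- by rewrite comp_fadd //; apply: fs_add.
- by rewrite comp_fscale //; apply: fs_scale.
Qed.

Lemma left_ad_span_mull1 r f : A_Q1 r -> left_ad_span f -> left_ad_span (r \o f).
Proof. by case=> [-> //| hr]; apply: left_ad_span_mull. Qed.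

Lemma left_ad_span_mulr s f : A_QL s -> left_ad_span f -> left_ad_span (f \o s).
Proof.
move=> hs; elim: hs f => {s} [_ [l Ll ->] | | s1 s2 _ IH1 _ IH2 | a s _ IH
                             | s1 s2 _ IH1 _ IH2] f hf;
  have lf := A_alg_linear (left_ad_span_sub_A hf).
- elim: {lf} hf => {f} [_ [r [x [hr Ix ->]]] | | f g _ hf _ hg | a f _ hf].
  + change (left_ad_span (r \o (ad br x \o ad br l))); rewrite ad_comm.
    apply: left_ad_span_mull1 => //; apply: fs_add; apply: fs_gen.
    * by exists (ad br l), x; split=> //; right; apply: ag_gen; exists l.
    * by exists id, (br x l); split=> //; [left | apply: ideal_brr].
  + exact: fs_zero.
  + exact: fs_add hf hg.
  + exact: fs_scale hf.
- by rewrite comp_fzero //; apply: fs_zero.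
- by rewrite comp_fadd //; apply: fs_add; [apply: IH1 | apply: IH2].
- by rewrite comp_fscale //; apply: fs_scale; apply: IH.
- exact: IH2 _ (IH1 _ hf).
Qed.

Lemma I_tilde_sub_left_ad_span f : Itil f -> left_ad_span f.
Proof.
elim=> {f} [_ [x Ix ->] | | f g _ hf _ hg | a f _ hf | r f hr _ hf
          | f r hr _ hf].
- by apply: fs_gen; exists id, x; split=> //; left.
- exact: fs_zero.
- exact: fs_add.
- exact: fs_scale.
- exact: left_ad_span_mull.
- exact: left_ad_span_mulr.
Qed.

Lemma transporter_brq_step j q v : (forall y, I y -> L (br q y)) ->
    transporter j v -> (forall x, I x -> transporter j (br q (br x v))) ->
  transporter j.+1 (br q v).
Proof.
move=> hq hv hqx f /I_tilde_sub_left_ad_span.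
apply: (fspan_sub (P := fun f => transporter j (f (br q v)))).
  exact/fsubmod_eval/transporter_submod.
move=> _ [r [x [hr Ix ->]]] /=; apply: (transporter_A_Q1 hr).
rewrite /ad ad_derivation; apply: submodD (hqx x Ix).
  exact: transporter_submod.
apply: transporter_A_Q hv; apply: ag_gen; exists (br x q) => //.
by rewrite brC; apply: submodN L_submod _; apply: hq.
Qed.

Lemma transporter_brq j q v : (forall y, I y -> L (br q y)) ->
  transporter j v -> transporter j.+1 (br q v).
Proof.
move=> hq; elim: j v => [|j IH] v hv; apply: transporter_brq_step => // x Ix.
- by apply: hq; apply: ideal_brr.
- by apply: IH; apply: hv; apply: ig_gen; exists x.
Qed.

Lemma ad_prod_homo_transporter qs j :
  (forall q, q \in qs -> forall y, I y -> L (br q y)) ->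
  {homo ad_prod br qs : v / transporter j v >-> transporter (j + size qs)%N v}.
Proof.
elim: qs j => [|q qs IH] j hq v hv /=; first by rewrite addn0.
rewrite addnS; apply: transporter_brq; first by apply: hq; rewrite mem_head.
by apply: IH hv => q' hq'; apply: hq; rewrite inE hq' orbT.
Qed.

Lemma ideal_pow_homo_transporter m nu k : (0 < m)%N -> ideal_pow Itil m nu ->
  {homo nu : v / transporter (k + m)%N v >-> transporter k v}.
Proof.
move=> hm hnu; move: k; apply: (ideal_pow_ind (P := fun m nu =>
  forall k, {homo nu : v / transporter (k + m)%N v >-> transporter k v})) hm hnu.
- by move=> n; apply: fsubmod_homo => k; apply: transporter_submod.
- by move=> f hf k v; rewrite addn1 => /(_ f hf).
- move=> n f g hf hg k v hv; apply: (hg k.+1 v _ f hf).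
  by rewrite addSn -addnS.
Qed.

End Extension.
End LieBracket.

Unset Implicit Arguments.

Theorem mainTheorem7 (Phi : comPzRingType) (Q : lmodType Phi)
    (br : Q -> Q -> Q) (L I : Q -> Prop) (qs : seq Q) :
  is_lie_bracket br ->
  lie_subalg br L ->
  lie_ideal br L I ->
  (0 < size qs)%N ->
  (forall q, q \in qs -> forall y, I y -> L (br q y)) ->
  forall nu, ideal_pow (I_tilde br L I) (size qs) nu ->
    A_0 br L (ad_prod br qs \o nu) /\ A_0 br L (nu \o ad_prod br qs).
Proof.
move=> Hbr HL HI hs hq nu hnu.
have nuA : A_alg br nu := ideal_pow_sub_A hs hnu.
have muA : A_alg br (ad_prod br qs).
  by case: qs hs {hq hnu} => // q qs _; apply: ad_prod_A.
split; split; try exact: ag_mul.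
- move=> x Lx; apply: (ad_prod_homo_series Hbr HL HI (k := 0) hq).
  by rewrite addn0; apply: (ideal_pow_homo_series Hbr HL HI (k := 0) hs hnu).
- move=> x Lx; apply: (ideal_pow_homo_transporter Hbr HL (k := 0) hs hnu).
  exact: (ad_prod_homo_transporter Hbr HL HI (j := 0) hq Lx).
Qed.
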